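(* If $x\in\mathbb R^n$ satisfies $Ax\le\tilde b$ for every $\tilde b\in B_1\times\cdots\times B_m$, then there exists $w\in\mathcal W$ such that $x=x(w)$. That is, $$\{x: Ax\le\tilde b\ \ \forall\tilde b\in B_1\times\cdots\times B_m\}\subseteq\{x(w):w\in\mathcal W\}.$$
   Context: $A\in\mathbb R^{m\times n}$ (rows $a_i^\top$) has full column rank $n\le m$, $b^{(0)}\in\mathbb R^m$, and $\{x:Ax\le b^{(0)}\}$ is bounded with nonempty interior. For $w\in\mathbb R^m_{++}$, the weighted center $(x(w),y(w),s(w))$ is the unique solution of $Ax+s=b^{(0)}$, $s>0$, $A^\top y=0$, $\mathrm{Diag}(s)y=w$. For each $i$, $\Delta b_i=(\Delta b_i^1,\dots,\Delta b_i^{N_i})$ is a nonzero vector with nonnegative entries and $B_i=\{b_i^{(0)}+\sum_{l=1}^{N_i}\Delta b_i^lz^l: z\in[-1,1]^{N_i}\}$. $\mathcal W=\{w\in\mathbb R^m_{++}: \sum_iw_i=1,\ y_i(w)\|\Delta b_i\|_1\le w_i<1\ \forall i\}$. *)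

(* the statement is purely order-algebraic, stated for an
   arbitrary real field R (covers R = the reals). *)
From HB Require Import structures.
From mathcomp Require Import all_boot all_order all_algebra.
Set Implicit Arguments. Unset Strict Implicit. Unset Printing Implicit Defensive.
Import Order.TTheory GRing.Theory Num.Theory.
Local Open Scope ring_scope.

Section Defs.
Variable R : realFieldType.

Definition in_poly (m n : nat) (A : 'M[R]_(m, n)) (b : 'cV[R]_m) (x : 'cV[R]_n) :=
  forall i, (A *m x) i 0 <= b i 0.

Definition poly_bounded (m n : nat) (A : 'M[R]_(m, n)) (b : 'cV[R]_m) :=
  exists M : R, forall x, in_poly A b x -> forall j, `|x j 0| <= M.

Definition poly_nonempty_interior (m n : nat) (A : 'M[R]_(m, n)) (b : 'cV[R]_m) :=
  exists x0 : 'cV[R]_n, exists eps : R, 0 < eps /\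
    forall x : 'cV[R]_n, (forall j, `|x j 0 - x0 j 0| < eps) -> in_poly A b x.

Definition weighted_center (m n : nat) (A : 'M[R]_(m, n)) (b0 : 'cV[R]_m)
    (w : 'cV[R]_m) (x : 'cV[R]_n) (y s : 'cV[R]_m) :=
  A *m x + s = b0 /\ (forall i, 0 < s i 0) /\ A^T *m y = 0 /\
  (forall i, s i 0 * y i 0 = w i 0).

Definition l1norm (k : nat) (v : 'I_k -> R) := \sum_(l < k) `|v l|.

Definition in_B (k : nat) (b0i : R) (db : 'I_k -> R) (t : R) :=
  exists z : 'I_k -> R, (forall l, -1 <= z l <= 1) /\
    t = b0i + \sum_(l < k) db l * z l.

Definition robust_feasible (m n : nat) (A : 'M[R]_(m, n)) (b0 : 'cV[R]_m)
    (N : 'I_m -> nat) (db : forall i : 'I_m, 'I_(N i) -> R) (x : 'cV[R]_n) :=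
  forall bt : 'cV[R]_m, (forall i, in_B (b0 i 0) (db i) (bt i 0)) -> in_poly A bt x.

(* w is in the set W: w > 0, sum w = 1, and y_i(w) ||Delta b_i||_1 <= w_i < 1,
   where y is the y-component of the weighted center of w *)
Definition in_W (m : nat) (N : 'I_m -> nat) (db : forall i : 'I_m, 'I_(N i) -> R)
    (w y : 'cV[R]_m) :=
  (forall i, 0 < w i 0) /\ \sum_(i < m) w i 0 = 1 /\
  (forall i, y i 0 * l1norm (db i) <= w i 0 /\ w i 0 < 1).

End Defs.

(* Let x be robustly feasible and let s := b0 - A x be its slack.  Choosing
   every perturbation z = -1 shows s_i >= ||db_i||_1 > 0.  Since the polyhedron
   {A x <= b0} is bounded and contains x, its recession cone is trivial:
   A d <= 0 forces d = 0.  By a Farkas-type theorem of the alternative (proved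
   below by induction on the number of generators) this yields, for each row
   k, a vector y >= 0 with y_k >= 1 and A^T y = 0; summing these gives a
   strictly positive Y with A^T Y = 0 (Stiemke's lemma).  Normalising
   y := Y / (sum_i s_i Y_i) and w := s .* y produces a weighted center
   (x, y, s) for w with w > 0 and sum w = 1.  Finally y_i ||db_i||_1 <=
   y_i s_i = w_i, and w_i < 1 because A has at least two rows: a single row
   annihilated by a positive multiple would make A zero, contradicting
   rank A = n > 0. *)
From HB Require Import structures.
From mathcomp Require Import all_boot all_order all_algebra.
From mathcomp Require Import lra.
Set Implicit Arguments. Unset Strict Implicit. Unset Printing Implicit Defensive.
Import Order.TTheory GRing.Theory Num.Theory.
Local Open Scope ring_scope.

Section Farkas.
Variables (R : realFieldType) (n : nat).

Definition dotv (u v : 'cV[R]_n) := \sum_j u j 0 * v j 0.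

Lemma dotBl u v e : dotv (u - v) e = dotv u e - dotv v e.
Proof. by rewrite /dotv -sumrB; apply: eq_bigr => j _; rewrite !mxE mulrBl. Qed.

Lemma dotBr u v e : dotv e (u - v) = dotv e u - dotv e v.
Proof. by rewrite /dotv -sumrB; apply: eq_bigr => j _; rewrite !mxE mulrBr. Qed.

Lemma dotZl a u e : dotv (a *: u) e = a * dotv u e.
Proof. by rewrite /dotv mulr_sumr; apply: eq_bigr => j _; rewrite !mxE mulrA. Qed.

Lemma dotZr a u e : dotv e (a *: u) = a * dotv e u.
Proof. by rewrite /dotv mulr_sumr; apply: eq_bigr => j _; rewrite !mxE mulrCA. Qed.

Lemma dot_gt0 c : c != 0 -> 0 < dotv c c.
Proof.
move=> cn0; have sq_ge0 j : 0 <= c j 0 * c j 0 by rewrite -expr2 sqr_ge0.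
rewrite lt_def sumr_ge0 // andbT; apply: contra cn0 => /eqP c0.
apply/eqP/matrixP => i j; rewrite ord1 mxE.
have /(_ i isT) /eqP := psumr_eq0P (fun j _ => sq_ge0 j) c0.
by rewrite mulf_eq0 orbb => /eqP.
Qed.

Lemma dot_proj_swap u d v e (al := dotv u d) :
  dotv v (e - (dotv u e / al) *: d) = dotv (v - (dotv v d / al) *: u) e.
Proof.
rewrite dotBr dotZr dotBl dotZl; congr (_ - _).
by rewrite [LHS]mulrC [LHS]mulrA [RHS]mulrAC.
Qed.

(* A conic combination of the generators projected along u lifts back to a
   combination of the original generators plus a multiple of u; this is the
   inductive step of Farkas' lemma when the new generator is not separated. *)
Lemma conic_unproject k (f : nat -> 'cV[R]_n) (lam b : nat -> R) u c a :
  c - a *: u = \sum_(i < k) lam i *: (f i - b i *: u) ->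
  c = \sum_(i < k) lam i *: f i + (a - \sum_(i < k) lam i * b i) *: u.
Proof.
have -> : \sum_(i < k) lam i *: (f i - b i *: u) =
          \sum_(i < k) lam i *: f i - (\sum_(i < k) lam i * b i) *: u.
  under eq_bigr do rewrite scalerBr scalerA.
  by rewrite sumrB -scaler_suml.
move=> Hc; rewrite -[c](subrK (a *: u)) Hc -addrA; congr (_ + _).
by rewrite scalerBl addrC.
Qed.

Lemma farkas (k : nat) (f : nat -> 'cV[R]_n) (c : 'cV[R]_n) :
  (exists lam : nat -> R, (forall i, 0 <= lam i) /\ c = \sum_(i < k) lam i *: f i) \/
  (exists d, (forall i, (i < k)%N -> dotv (f i) d <= 0) /\ 0 < dotv c d).
Proof.
elim: k f c => [|k IH] f c.
  have [->|cn0] := eqVneq c 0.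
    by left; exists (fun _ => 0); rewrite big_ord0.
  by right; exists c; split; [move=> i; rewrite ltn0 | exact: dot_gt0].
have [[lam [lam0 ->]] | [d [fd cd]]] := IH f c.
  left; exists (fun i => if (i < k)%N then lam i else 0); split.
    by move=> i; case: ifP.
  by rewrite big_ord_recr /= ltnn scale0r addr0; apply: eq_bigr => i _; rewrite ltn_ord.
have [fkd | fkd] := lerP (dotv (f k) d) 0.
  right; exists d; split => // i; rewrite ltnS leq_eqVlt.
  by case/orP => [/eqP->|/fd].
set al := dotv (f k) d.
have aln0 : al != 0 by rewrite gt_eqF.
have [[lam [lam0 Hc]] | [e [fe ce]]] :=
  IH (fun i => f i - (dotv (f i) d / al) *: f k) (c - (dotv c d / al) *: f k).
- left; set mu := dotv c d / al - \sum_(i < k) lam i * (dotv (f i) d / al).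
  exists (fun i => if (i < k)%N then lam i else mu); split.
    move=> i; case: ifP => // _; rewrite subr_ge0.
    apply: le_trans (divr_ge0 (ltW cd) (ltW fkd)); apply: sumr_le0 => j _.
    by apply: mulr_ge0_le0 => //; rewrite pmulr_lle0 ?invr_gt0 ?fd.
  rewrite big_ord_recr /= ltnn.
  rewrite (conic_unproject (b := fun i => dotv (f i) d / al) Hc).
  by congr (_ + _); apply: eq_bigr => i _; rewrite ltn_ord.
- right; exists (e - (dotv (f k) e / al) *: d); split; last by rewrite dot_proj_swap.
  move=> i; rewrite ltnS leq_eqVlt => /orP[/eqP->|ik].
    by rewrite dotBr dotZr -/al divfK // subrr.
  by rewrite dot_proj_swap; exact: fe.
Qed.

End Farkas.

Section Polyhedron.
Variables (R : realFieldType) (m n : nat) (A : 'M[R]_(m, n)).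

Lemma dot_row i d : dotv (row i A)^T d = (A *m d) i 0.
Proof. by rewrite /dotv mxE; apply: eq_bigr => j _; rewrite !mxE. Qed.

Lemma trmx_mul_sum (y : 'cV[R]_m) : A^T *m y = \sum_i y i 0 *: (row i A)^T.
Proof.
apply/matrixP => j j'; rewrite ord1 !mxE summxE.
by apply: eq_bigr => i _; rewrite !mxE mulrC.
Qed.

Lemma bounded_recession_trivial (b : 'cV[R]_m) x :
  poly_bounded A b -> in_poly A b x ->
  forall d : 'cV[R]_n, (forall i, (A *m d) i 0 <= 0) -> d = 0.
Proof.
move=> [M HM] x_in d Ad; apply/matrixP => j j'; rewrite ord1 mxE.
apply/eqP/negPn/negP => dj.
have dj0 : 0 < `|d j 0| by rewrite normr_gt0.
set t := (M + `|x j 0| + 1) / `|d j 0|.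
have M0 : 0 <= M by apply: le_trans (HM x x_in j).
have t0 : 0 <= t by rewrite divr_ge0 ?(ltW dj0) //; have := normr_ge0 (x j 0); lra.
have feas : in_poly A b (x + t *: d).
  move=> i; rewrite mulmxDr -scalemxAr.
  have h1 := x_in i; have h2 : t * (A *m d) i 0 <= 0 by apply: mulr_ge0_le0.
  rewrite !mxE in h1 h2 *; lra.
have far : M + 1 <= `|(x + t *: d) j 0|.
  rewrite !mxE addrC; apply: le_trans (lerB_normD _ _).
  rewrite normrM (ger0_norm t0) divfK ?gt_eqF //; lra.
by have := le_trans far (HM _ feas j); lra.
Qed.

Lemma dependency_through_row :
  (forall d : 'cV[R]_n, (forall i, (A *m d) i 0 <= 0) -> d = 0) ->
  forall k : 'I_m, exists y : 'cV[R]_m,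
    (forall i, 0 <= y i 0) /\ 1 <= y k 0 /\ A^T *m y = 0.
Proof.
move=> rec0 k; pose f i := (row (insubd k i) A)^T.
have [[lam [lam0 Hc]] | [d [fd cd]]] := farkas m f (- f k).
  exists (\col_i (lam i + (i == k)%:R)); split.
    by move=> i; rewrite mxE addr_ge0 ?ler0n.
  split; first by rewrite mxE eqxx lerDr.
  have {}Hc : - (row k A)^T = \sum_(i < m) lam i *: (row i A)^T.
    by move: Hc; rewrite /f valKd; under eq_bigr do rewrite valKd.
  rewrite trmx_mul_sum; under eq_bigr do rewrite mxE scalerDl.
  rewrite big_split /= -Hc (bigD1 k) //= eqxx scale1r big1 ?addr0 ?addNr //.
  by move=> i /negbTE ->; rewrite scale0r.
have Ad i : (A *m d) i 0 <= 0 by rewrite -dot_row -(valKd k i); exact: (fd i (ltn_ord i)).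
by move: cd; rewrite (rec0 d Ad) /dotv big1 ?ltxx // => j _; rewrite [X in _ * X]mxE mulr0.
Qed.

Lemma stiemke :
  (forall d : 'cV[R]_n, (forall i, (A *m d) i 0 <= 0) -> d = 0) ->
  exists Y : 'cV[R]_m, (forall i, 1 <= Y i 0) /\ A^T *m Y = 0.
Proof.
move=> /dependency_through_row /fin_all_exists [yk Hy].
exists (\sum_k yk k); split.
  move=> i; rewrite summxE (bigD1 i) //=.
  have : 0 <= \sum_(k | k != i) yk k i 0 by apply: sumr_ge0 => k _; case: (Hy k).
  by case: (Hy i) => _ [? _]; lra.
by rewrite mulmx_sumr big1 // => k _; case: (Hy k) => _ [_ ->].
Qed.

Lemma two_rows_of_kernel (Y : 'cV[R]_m) :
  (0 < \rank A)%N -> A^T *m Y = 0 -> (forall i, Y i 0 != 0) -> (1 < m)%N.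
Proof.
move=> rk_gt0 AY Yn0; rewrite ltnNge; apply/negP => m_le1.
suff A0 : A = 0 by move: rk_gt0; rewrite A0 mxrank0.
have ord_eq (i k : 'I_m) : i = k.
  apply: val_inj => /=; have := leq_trans (ltn_ord i) m_le1.
  by have := leq_trans (ltn_ord k) m_le1; rewrite !ltnS !leqn0 => /eqP -> /eqP ->.
apply/matrixP => k j; rewrite mxE.
have {}AY := congr1 (fun M : 'M[R]_(n, 1) => M j 0) AY.
move: AY; rewrite !mxE (bigD1 k) //= big1 => [|i ik]; last by rewrite (ord_eq i k) eqxx in ik.
by rewrite addr0 !mxE => /eqP; rewrite mulf_eq0 (negbTE (Yn0 k)) orbF => /eqP.
Qed.

End Polyhedron.

Lemma lt1_of_sum1 (R : realFieldType) m (w : 'cV[R]_m) :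
  (1 < m)%N -> (forall i, 0 < w i 0) -> \sum_i w i 0 = 1 -> forall i, w i 0 < 1.
Proof.
move=> m_gt1 wpos wsum i.
have [j ji] : exists j : 'I_m, j != i.
  exists (if val i == 0%N then Ordinal m_gt1 else Ordinal (ltnW m_gt1)).
  by case: i => [[|?] ?]; rewrite -val_eqE.
move: wsum; rewrite (bigD1 i) //= (bigD1 j) //=.
have : 0 <= \sum_(k | (k != i) && (k != j)) w k 0 by apply: sumr_ge0 => k _; exact: ltW.
by have := wpos j; lra.
Qed.

(* Robust feasibility against the worst case z = -1 leaves slack at least
   ||db_i||_1 in every constraint. *)
Lemma robust_slack (R : realFieldType) m n (A : 'M[R]_(m, n)) b0
    (N : 'I_m -> nat) (db : forall i : 'I_m, 'I_(N i) -> R) x :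
  (forall i l, 0 <= db i l) -> robust_feasible A b0 db x ->
  forall i, l1norm (db i) <= (b0 - A *m x) i 0.
Proof.
move=> db_ge0 Hrob i; pose bt := \col_j (b0 j 0 - \sum_l db j l).
have bt_in j : in_B (b0 j 0) (db j) (bt j 0).
  exists (fun _ => -1); split; first by move=> l; rewrite lexx (le_trans (lerN10 _) ler01).
  by rewrite mxE (eq_bigr (fun l => - db j l) (fun l _ => mulrN1 _)) sumrN.
have nrm : l1norm (db i) = \sum_l db i l by apply: eq_bigr => l _; rewrite ger0_norm.
by have := Hrob bt bt_in i; rewrite nrm !mxE; lra.
Qed.

Lemma l1norm_gt0 (R : realFieldType) k (v : 'I_k -> R) :
  (forall l, 0 <= v l) -> (exists l, v l != 0) -> 0 < l1norm v.
Proof.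
move=> v_ge0 [l0 vl0]; rewrite /l1norm (bigD1 l0) //=.
by rewrite ltr_pwDl ?normr_gt0 ?sumr_ge0.
Qed.

Lemma normalized_center (R : realFieldType) m n (A : 'M[R]_(m, n)) b0 x
    (Y : 'cV[R]_m) (i0 : 'I_m) (s := b0 - A *m x) :
  (forall i, 0 < s i 0) -> (forall i, 1 <= Y i 0) -> A^T *m Y = 0 ->
  exists w y, weighted_center A b0 w x y s /\
    (forall i, 0 < w i 0) /\ \sum_i w i 0 = 1.
Proof.
move=> s_gt0 Y_ge1 AY; set T := \sum_i s i 0 * Y i 0.
have sY_gt0 i : 0 < s i 0 * Y i 0 by rewrite mulr_gt0 ?s_gt0 ?(lt_le_trans ltr01 (Y_ge1 i)).
have T_gt0 : 0 < T.
  by rewrite /T (bigD1 i0) //= ltr_pwDl ?sumr_ge0 // => i _; exact: ltW.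
exists (\col_i (T^-1 * (s i 0 * Y i 0))), (T^-1 *: Y); split; last split.
- do !split; first by rewrite /s addrC subrK.
  + exact: s_gt0.
  + by rewrite -scalemxAr AY scaler0.
  + by move=> i; rewrite !mxE mulrCA.
- by move=> i; rewrite mxE mulr_gt0 ?invr_gt0.
- under eq_bigr do rewrite mxE.
  by rewrite -mulr_sumr mulVf ?gt_eqF.
Qed.

Theorem propositionC1 (R : realFieldType) (m n : nat)
  (A : 'M[R]_(m, n)) (b0 : 'cV[R]_m)
  (N : 'I_m -> nat) (db : forall i : 'I_m, 'I_(N i) -> R)
  (Hn : (0 < n)%N) (Hnm : (n <= m)%N)
  (Hrank : \rank A = n)
  (Hbdd : poly_bounded A b0)
  (Hint : poly_nonempty_interior A b0)
  (Hdb_nonneg : forall i l, 0 <= db i l)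
  (Hdb_nonzero : forall i, exists l, db i l != 0)
  (x : 'cV[R]_n) :
  robust_feasible A b0 db x ->
  exists w : 'cV[R]_m, exists y s : 'cV[R]_m,
    weighted_center A b0 w x y s /\ in_W db w y.
Proof.
move=> Hrob; set s := b0 - A *m x.
have s_ge := robust_slack Hdb_nonneg Hrob.
have s_gt0 i : 0 < s i 0 := lt_le_trans (l1norm_gt0 (Hdb_nonneg i) (Hdb_nonzero i)) (s_ge i).
have x_in : in_poly A b0 x.
  by move=> i; have := s_gt0 i; rewrite !mxE subr_gt0 => /ltW.
have [Y [Y_ge1 AY]] := stiemke (bounded_recession_trivial Hbdd x_in).
have m_gt1 : (1 < m)%N.
  apply: (two_rows_of_kernel _ AY) => [|i]; first by rewrite Hrank.
  by rewrite gt_eqF // (lt_le_trans ltr01).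
have [w [y [wc [w_gt0 w_sum]]]] :=
  normalized_center (Ordinal (ltnW m_gt1)) s_gt0 Y_ge1 AY.
exists w, y, s; split=> //; do !split => //; last exact: lt1_of_sum1.
have [_ [_ [_ sy]]] := wc.
have y_gt0 : 0 < y i 0 by rewrite -(pmulr_rgt0 _ (s_gt0 i)) sy.
by rewrite -sy mulrC ler_wpM2r ?(ltW y_gt0).
Qed.
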